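(* Let $f:(0,1)\to(0,1)$ be of the form $f(p)=1-\sum_{k=1}^\infty c_k(1-p)^k$ with $c_k\ge0$ and $\sum_k c_k=1$, and let $p\in(0,1)$. Algorithm 2 (described below), applied to i.i.d. Bernoulli($p$) inputs, uses a total number $N$ of inputs with $$\mathbb E[N]=\frac{f(p)}{p}\left(1+\frac{2}{p(1-p)}\right),$$ and there exist $A>0$, $\beta<1$ with $\Pr[N>n]\le A\beta^n$ for all $n$ (i.e. the algorithm is fast).
   Context: Let $d_k=c_k/(1-\sum_{j=1}^{k-1}c_j)\in[0,1]$ (if $c_K>0$ and $c_k=0$ for $k>K$, then $d_K=1$ and later $d_k$ are not needed). Write each $d_k$ in binary as $0.b_1b_2b_3\cdots$ with infinitely many fractional digits (so $1=0.111\cdots$). Algorithm 2 uses only the input sequence $X_1,X_2,\dots$ (i.i.d. Bernoulli($p$)), taken in order: set $i=1$. (2) Take one input, call it $X_i$. (3) Generate $V_i$ as follows: set $j=1$; (3.2) keep taking pairs of inputs until the two values in a pair differ, and let $T$ be the first value of that pair; (3.3) if $T=0$, increase $j$ and return to (3.2); otherwise set $V_i$ equal to the $j$-th fractional binary digit of $d_i$. (4) If $V_i=1$ or $X_i=1$, output $Y=X_i$ and stop; otherwise increase $i$ and return to (2). $N$ is the total number of inputs consumed in all steps. *)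

From Stdlib Require Import Reals List.
Open Scope R_scope.

(** Coefficients c_k are indexed from k = 1 (c 0 is unused). *)

Fixpoint psum (c : nat -> R) (k : nat) : R :=
  match k with
  | O => 0
  | S k' => psum c k' + c (S k')
  end.

(** d_k = c_k / (1 - sum_{j=1}^{k-1} c_j).  (When the denominator is 0, c_k = 0
    and Rocq's total division gives d_k = 0; such d_k are never used.) *)
Definition dcoef (c : nat -> R) (k : nat) : R := c k / (1 - psum c (k - 1)).

(** s is the binary expansion x = 0.s_1 s_2 s_3 ... with infinitely many
    fractional digits (non-terminating when x > 0; all zeros when x = 0). *)
Definition bin_expansion (x : R) (s : nat -> bool) : Prop :=
  infinite_sum (fun j => (if s (S j) then 1 else 0) / 2 ^ (S j)) x /\
  (0 < x -> forall m : nat, exists j : nat, (m < j)%nat /\ s j = true).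

(** States of Algorithm 2, advanced one input bit at a time.
    ReadX i        : about to take X_i (step 2).
    PairFst i x j  : X_i = x, generating V_i, current digit index j,
                     about to take the first element of a pair (step 3.2).
    PairSnd i x j t: same, first element of the current pair is t. *)
Inductive state : Type :=
| ReadX : nat -> state
| PairFst : nat -> bool -> nat -> state
| PairSnd : nat -> bool -> nat -> bool -> state
| Done : bool -> state.

(** bits i j = j-th fractional binary digit of d_i. *)
Definition step (bits : nat -> nat -> bool) (st : state) (a : bool) : state :=
  match st with
  | ReadX i => PairFst i a 1
  | PairFst i x j => PairSnd i x j a
  | PairSnd i x j t =>
      if Bool.eqb t a then PairFst i x j          (* pair equal: take another pair *)
      else if negb t then PairFst i x (S j)       (* T = 0: increase j *)
      else (* T = 1: V_i = bits i j *)
        if orb (bits i j) x then Done x else ReadX (S i)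
  | Done y => Done y
  end.

Definition run (bits : nat -> nat -> bool) (w : list bool) : state :=
  fold_left (step bits) w (ReadX 1).

Definition is_done (st : state) : bool :=
  match st with Done _ => true | _ => false end.

Fixpoint words (n : nat) : list (list bool) :=
  match n with
  | O => nil :: nil
  | S n' => map (cons false) (words n') ++ map (cons true) (words n')
  end.

Fixpoint weight (p : R) (w : list bool) : R :=
  match w with
  | nil => 1
  | a :: w' => (if a then p else 1 - p) * weight p w'
  end.

Definition sumR (l : list R) : R := fold_right Rplus 0 l.

Definition stops_exactly (bits : nat -> nat -> bool) (w : list bool) : bool :=
  is_done (run bits w) && negb (is_done (run bits (removelast w))) .

Definition prob_N_eq (bits : nat -> nat -> bool) (p : R) (n : nat) : R :=
  sumR (map (fun w => if stops_exactly bits w then weight p w else 0) (words n)).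

Definition prob_N_gt (bits : nat -> nat -> bool) (p : R) (n : nat) : R :=
  sumR (map (fun w => if is_done (run bits w) then 0 else weight p w) (words n)).

From Stdlib Require Import Reals List Lra Lia Psatz.
From Coquelicot Require Import Coquelicot.
Import ListNotations.
Open Scope R_scope.

(* Let survival st n be the probability that the algorithm, started in state st, still
   runs after n inputs.  From every state some six inputs stop it, so survival decays
   geometrically; this is the tail bound.

   For the mean, let remaining st be the expected number of inputs still to be consumed.
   A round costs one input for X_i plus on average 2/(p(1-p)) inputs for V_i, and round
   i+1 is played after round i with probability (1-p)(1-d_i); solving this recursion
   gives remaining (ReadX 1) = f(p)/p (1 + 2/(p(1-p))).  First-step analysis shows that
   E[remaining after n inputs] + sum_(k<n) Pr[N > k] = remaining (ReadX 1), and the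
   geometric tail lets n go to infinity. *)

Lemma sumR_app (l1 l2 : list R) : sumR (l1 ++ l2) = sumR l1 + sumR l2.
Proof. induction l1 as [|x l IH]; simpl; [lra | rewrite IH; lra]. Qed.

Lemma sumR_map_scal {A : Type} (k : R) (F : A -> R) (l : list A) :
  sumR (map (fun x => k * F x) l) = k * sumR (map F l).
Proof. induction l as [|x l IH]; simpl; [lra | rewrite IH; lra]. Qed.

Fixpoint sum_lt (f : nat -> R) (n : nat) : R :=
  match n with O => 0 | S k => sum_lt f k + f k end.

Lemma pow_le_1 (x : R) (n : nat) : 0 <= x <= 1 -> 0 <= x ^ n <= 1.
Proof. intros Hx; split; [apply pow_le; lra | rewrite <- (pow1 n); apply pow_incr; lra]. Qed.

Lemma bernoulli_ineq (x : R) (n : nat) : 0 <= x <= 1 -> 1 - INR n * x <= (1 - x) ^ n.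
Proof.
  intros Hx; induction n as [|n IH]; [simpl; lra|].
  rewrite S_INR; simpl pow.
  assert (0 <= INR n * x * x) by (apply Rmult_le_pos; [apply Rmult_le_pos; [apply pos_INR|]|]; lra).
  assert ((1 - INR n * x) * (1 - x) <= (1 - x) ^ n * (1 - x)) by (apply Rmult_le_compat_r; lra).
  lra.
Qed.

Lemma INR_mult_pow_le (s : R) (n : nat) : 0 <= s <= 1 -> INR n * s ^ n * (1 - s) <= 1 - s ^ n.
Proof.
  intros Hs; induction n as [|n IH]; [simpl; lra|].
  rewrite S_INR; simpl pow.
  assert (0 <= s ^ n <= 1) by (apply pow_le_1; lra).
  assert (0 <= INR n) by apply pos_INR.
  assert (s * (INR n * s ^ n * (1 - s)) <= s * (1 - s ^ n)) by (apply Rmult_le_compat_l; lra).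
  assert (0 <= (1 - s) * (1 - s * s ^ n)) by (apply Rmult_le_pos; nra).
  nra.
Qed.

Lemma is_series_le_compat (a b : nat -> R) (la lb : R) :
  (forall n, a n <= b n) -> is_series a la -> is_series b lb -> la <= lb.
Proof.
  intros Hab Ha Hb.
  apply (is_lim_seq_le (sum_n a) (sum_n b) la lb); auto.
  intros n; rewrite !sum_n_Reals; apply sum_Rle; auto.
Qed.

Lemma is_series_nonneg (a : nat -> R) (l : R) : (forall n, 0 <= a n) -> is_series a l -> 0 <= l.
Proof.
  intros Ha H.
  apply (is_lim_seq_le (fun _ => 0) (sum_n a) 0 l); [| apply is_lim_seq_const | exact H].
  intros n; rewrite sum_n_Reals; apply cond_pos_sum; auto.
Qed.

Lemma is_series_tail_psum (a : nat -> R) (l : R) (m : nat) :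
  is_series (fun k => a (S k)) l -> is_series (fun k => a (S (m + k))) (l - psum a m).
Proof.
  intros H; induction m as [|m IH]; [simpl; rewrite Rminus_0_r; exact H|].
  apply (is_series_ext (fun k => a (S (m + S k)))); [intros k; do 2 f_equal; lia|].
  apply (is_series_incr_1 (fun k => a (S (m + k)))).
  match goal with |- is_series _ ?L => replace L with (l - psum a m); auto end.
  rewrite Nat.add_0_r; simpl; unfold plus; simpl; ring.
Qed.

Lemma is_series_half : is_series (fun l => / 2 ^ S l) 1.
Proof.
  assert (H : is_series (fun n => / 2 * (/ 2) ^ n) (/ 2 * / (1 - / 2)))
    by (apply (is_series_scal_l (/ 2) (fun n => (/ 2) ^ n)), is_series_geom;
        rewrite Rabs_pos_eq; lra).
  replace (/ 2 * / (1 - / 2)) with 1 in H by field.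
  revert H; apply is_series_ext; intros n; rewrite pow_inv, <- Rinv_mult; reflexivity.
Qed.

Lemma is_lim_seq_squeeze_0 (u v : nat -> R) :
  (forall n, 0 <= u n <= v n) -> is_lim_seq v 0 -> is_lim_seq u 0.
Proof. intros H Hv; apply (is_lim_seq_le_le (fun _ => 0) u v); auto; apply is_lim_seq_const. Qed.

Lemma is_lim_seq_scal_0 (u : nat -> R) (K : R) :
  is_lim_seq u 0 -> is_lim_seq (fun n => K * u n) 0.
Proof.
  intros H; replace (Finite 0) with (Rbar_mult K 0) by (simpl; f_equal; ring).
  apply is_lim_seq_scal_l, H.
Qed.

(* With t = (1 + s) / 2 we have s <= t^2, and n t^n <= 1 / (1 - t) by [INR_mult_pow_le]. *)
Lemma is_lim_seq_INR_pow (s : R) : 0 <= s < 1 -> is_lim_seq (fun n => INR n * s ^ n) 0.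
Proof.
  intros Hs; set (t := (1 + s) / 2).
  assert (Ht : 0 < t < 1) by (unfold t; lra).
  apply (is_lim_seq_squeeze_0 _ (fun n => / (1 - t) * t ^ n)).
  - intros n.
    assert (0 <= t ^ n <= 1) by (apply pow_le_1; lra).
    assert (s ^ n <= t ^ n * t ^ n)
      by (rewrite <- Rpow_mult_distr; apply pow_incr; unfold t; nra).
    assert (INR n * t ^ n <= / (1 - t)).
    { apply (Rmult_le_reg_r (1 - t)); [lra|]; rewrite Rinv_l by lra.
      pose proof (INR_mult_pow_le t n ltac:(lra)); lra. }
    assert (0 <= INR n) by apply pos_INR.
    split; [apply Rmult_le_pos; [|apply pow_le]; lra|].
    apply Rle_trans with (INR n * t ^ n * t ^ n); [nra|].
    apply Rmult_le_compat_r; lra.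
  - apply is_lim_seq_scal_0, is_lim_seq_geom; rewrite Rabs_pos_eq; lra.
Qed.

Section Expectation.

Variable p : R.

Definition expect (n : nat) (F : list bool -> R) : R :=
  sumR (map (fun w => weight p w * F w) (words n)).

Lemma expect_0 (F : list bool -> R) : expect 0 F = F [].
Proof. unfold expect; simpl; lra. Qed.

Lemma expect_S (n : nat) (F : list bool -> R) :
  expect (S n) F =
  (1 - p) * expect n (fun w => F (false :: w)) + p * expect n (fun w => F (true :: w)).
Proof.
  unfold expect; simpl words.
  rewrite map_app, sumR_app, !map_map, <- !sumR_map_scal.
  f_equal; f_equal; apply map_ext; intros w; simpl; ring.
Qed.

Lemma expect_ext (n : nat) (F G : list bool -> R) :
  (forall w, length w = n -> F w = G w) -> expect n F = expect n G.
Proof.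
  revert F G; induction n as [|n IH]; intros F G H.
  - rewrite !expect_0; auto.
  - rewrite !expect_S; f_equal; f_equal; apply IH; intros w Hw; apply H; simpl; lia.
Qed.

Lemma expect_const (n : nat) (a : R) : expect n (fun _ => a) = a.
Proof. induction n as [|n IH]; [rewrite expect_0 | rewrite expect_S, IH]; ring. Qed.

Lemma expect_scal (n : nat) (k : R) (F : list bool -> R) :
  expect n (fun w => k * F w) = k * expect n F.
Proof.
  revert F; induction n as [|n IH]; intros F;
    [rewrite !expect_0 | rewrite !expect_S, !IH]; ring.
Qed.

Lemma expect_minus (n : nat) (F G : list bool -> R) :
  expect n (fun w => F w - G w) = expect n F - expect n G.
Proof.
  revert F G; induction n as [|n IH]; intros F G;
    [rewrite !expect_0 | rewrite !expect_S, !IH]; ring.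
Qed.

Lemma expect_app (k n : nat) (F : list bool -> R) :
  expect (k + n) F = expect k (fun u => expect n (fun v => F (u ++ v))).
Proof.
  revert F; induction k as [|k IH]; intros F.
  - rewrite expect_0; reflexivity.
  - rewrite Nat.add_succ_l, !expect_S, !IH; reflexivity.
Qed.

Lemma expect_removelast (n : nat) (F : list bool -> R) :
  expect (S n) (fun w => F (removelast w)) = expect n F.
Proof.
  revert F; induction n as [|n IH]; intros F.
  - rewrite expect_S, !expect_0; simpl; ring.
  - rewrite expect_S, (expect_S n F), <- !IH.
    f_equal; f_equal; apply expect_ext; intros [|a w] Hw; try discriminate; reflexivity.
Qed.

Hypothesis p_range : 0 <= p <= 1.

Lemma weight_ge_pow (w : list bool) : (p * (1 - p)) ^ length w <= weight p w.
Proof.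
  induction w as [|a w IH]; simpl; [lra|].
  assert (0 <= (p * (1 - p)) ^ length w) by (apply pow_le; nra).
  destruct a; apply Rmult_le_compat; nra.
Qed.

Lemma expect_le (n : nat) (F G : list bool -> R) :
  (forall w, F w <= G w) -> expect n F <= expect n G.
Proof.
  revert F G; induction n as [|n IH]; intros F G H.
  - rewrite !expect_0; auto.
  - rewrite !expect_S; apply Rplus_le_compat; apply Rmult_le_compat_l; try lra; apply IH; auto.
Qed.

Lemma expect_le_const (n : nat) (F : list bool -> R) (B : R) :
  (forall w, F w <= B) -> expect n F <= B.
Proof. intros H; rewrite <- (expect_const n B); apply expect_le; auto. Qed.

Lemma expect_ge_const (n : nat) (F : list bool -> R) (B : R) :
  (forall w, B <= F w) -> B <= expect n F.
Proof. intros H; rewrite <- (expect_const n B); apply expect_le; auto. Qed.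

Lemma expect_le_except (w : list bool) (G : list bool -> R) (B : R) :
  (forall u, G u <= B) -> expect (length w) G <= B - weight p w * (B - G w).
Proof.
  revert G; induction w as [|a w IH]; intros G HG.
  - rewrite expect_0; simpl; lra.
  - simpl length; rewrite expect_S.
    assert (Hf := expect_le_const (length w) (fun u => G (false :: u)) B (fun u => HG _)).
    assert (Ht := expect_le_const (length w) (fun u => G (true :: u)) B (fun u => HG _)).
    assert (IHf := IH (fun u => G (false :: u)) (fun u => HG _)).
    assert (IHt := IH (fun u => G (true :: u)) (fun u => HG _)).
    simpl weight; destruct a; nra.
Qed.

End Expectation.

Section Survival.

Variables (bits : nat -> nat -> bool) (p : R).

Definition run_from (st : state) (w : list bool) : state := fold_left (step bits) w st.

Lemma run_run_from (w : list bool) : run bits w = run_from (ReadX 1) w.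
Proof. reflexivity. Qed.

Lemma run_from_app (st : state) (u v : list bool) :
  run_from st (u ++ v) = run_from (run_from st u) v.
Proof. apply fold_left_app. Qed.

Lemma run_from_done (st : state) (w : list bool) : is_done st = true -> run_from st w = st.
Proof.
  destruct st; try discriminate; intros _.
  unfold run_from; induction w; simpl; auto.
Qed.

Lemma is_done_removelast (st : state) (w : list bool) :
  is_done (run_from st (removelast w)) = true -> is_done (run_from st w) = true.
Proof.
  induction w as [|a w _] using rev_ind; auto.
  rewrite removelast_last, run_from_app; intros H; rewrite run_from_done; auto.
Qed.

Definition survival (st : state) (n : nat) : R :=
  expect p n (fun w => if is_done (run_from st w) then 0 else 1).

Lemma survival_done (st : state) (n : nat) : is_done st = true -> survival st n = 0.
Proof.
  intros H; unfold survival; transitivity (expect p n (fun _ => 0)); [|apply expect_const].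
  apply expect_ext; intros w _; rewrite run_from_done, H; auto.
Qed.

Lemma survival_app (st : state) (k n : nat) :
  survival st (k + n) = expect p k (fun u => survival (run_from st u) n).
Proof.
  unfold survival; rewrite expect_app.
  apply expect_ext; intros u _; apply expect_ext; intros v _; rewrite run_from_app; auto.
Qed.

Lemma prob_N_gt_survival (n : nat) : prob_N_gt bits p n = survival (ReadX 1) n.
Proof.
  unfold prob_N_gt, survival, expect; f_equal; apply map_ext; intros w.
  rewrite run_run_from; destruct (is_done _); ring.
Qed.

Lemma prob_N_eq_survival (n : nat) :
  prob_N_eq bits p (S n) = survival (ReadX 1) n - survival (ReadX 1) (S n).
Proof.
  set (alive := fun w => if is_done (run_from (ReadX 1) w) then 0 else 1).
  unfold survival; fold alive.
  rewrite <- (expect_removelast p n alive), <- expect_minus.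
  unfold prob_N_eq, expect; f_equal; apply map_ext; intros w.
  unfold stops_exactly, alive; rewrite !run_run_from.
  pose proof (is_done_removelast (ReadX 1) w) as Hmono.
  destruct (is_done (run_from _ (removelast w))), (is_done (run_from _ w)); simpl;
    try ring; discriminate Hmono; reflexivity.
Qed.

Lemma partial_sums_N (N : nat) :
  sum_f_R0 (fun n => INR n * prob_N_eq bits p n) N =
  sum_lt (survival (ReadX 1)) N - INR N * survival (ReadX 1) N.
Proof.
  induction N as [|N IH]; [simpl; ring|].
  rewrite tech5, IH, prob_N_eq_survival, S_INR; cbn [sum_lt]; ring.
Qed.

Hypothesis p_range : 0 < p < 1.

Lemma survival_bounds (st : state) (n : nat) : 0 <= survival st n <= 1.
Proof.
  split; [apply expect_ge_const | apply expect_le_const]; try lra;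
    intros w; destruct (is_done _); lra.
Qed.

Lemma done_within_6 (st : state) :
  exists w, length w = 6%nat /\ is_done (run_from st w) = true.
Proof.
  destruct st as [i | i x j | i x j [|] | y];
    [ exists [true; true; false; true; true; true]
    | exists [true; false; true; true; false; true]
    | exists [false; true; true; false; true; true]
    | exists [false; true; false; true; true; false]
    | exists [true; true; true; true; true; true] ];
    split; try reflexivity; try destruct x; unfold run_from; simpl;
    repeat (destruct (bits _ _); simpl); reflexivity.
Qed.

Lemma survival_contract (st : state) (w : list bool) (n : nat) (B : R) :
  is_done (run_from st w) = true -> (forall s, survival s n <= B) ->
  survival st (length w + n) <= (1 - (p * (1 - p)) ^ length w) * B.
Proof.
  intros Hw HB.
  assert (0 <= B) by (apply Rle_trans with (survival st n); [apply survival_bounds | apply HB]).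
  pose proof (weight_ge_pow p ltac:(lra) w).
  rewrite survival_app.
  eapply Rle_trans; [apply expect_le_except; [lra | intros u; apply HB]|].
  cbv beta; rewrite (survival_done _ _ Hw); nra.
Qed.

Lemma survival_geometric (q r : nat) (st : state) :
  survival st (q * 6 + r) <= (1 - (p * (1 - p)) ^ 6) ^ q.
Proof.
  revert st; induction q as [|q IH]; intros st; [apply survival_bounds|].
  destruct (done_within_6 st) as (w & Hlen & Hw).
  replace (S q * 6 + r)%nat with (length w + (q * 6 + r))%nat by lia.
  eapply Rle_trans; [apply (survival_contract st w _ _ Hw IH)|]; rewrite Hlen; apply Rle_refl.
Qed.

(* Take beta = 1 - (p(1-p))^6 / 6, so that beta^6 >= 1 - (p(1-p))^6 by Bernoulli's
   inequality. *)
Lemma survival_exp_bound :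
  exists A beta, 0 < A /\ 0 < beta < 1 /\ forall st n, survival st n <= A * beta ^ n.
Proof.
  set (M := (p * (1 - p)) ^ 6).
  assert (HM : 0 < M <= 1) by (split; [apply pow_lt | apply pow_le_1]; nra).
  set (beta := 1 - M / 6).
  assert (Hb : 0 < beta < 1) by (unfold beta; lra).
  assert (Hb5 : 0 < beta ^ 5) by (apply pow_lt; lra).
  exists (/ beta ^ 5), beta; split; [apply Rinv_0_lt_compat; lra|]; split; [lra|].
  intros st n.
  rewrite (Nat.div_mod_eq n 6), Nat.mul_comm.
  set (q := (n / 6)%nat); set (r := (n mod 6)%nat).
  assert (Hr : (r < 6)%nat) by (apply Nat.mod_upper_bound; lia).
  assert (H6 : 1 - M <= beta ^ 6)
    by (pose proof (bernoulli_ineq (M / 6) 6 ltac:(lra)) as Hbern;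
        replace (INR 6) with 6 in Hbern by (simpl; lra); unfold beta; lra).
  assert (Hq : (1 - M) ^ q <= beta ^ (q * 6))
    by (rewrite Nat.mul_comm, pow_mult; apply pow_incr; lra).
  assert (Hr5 : beta ^ 5 <= beta ^ r).
  { replace 5%nat with (r + (5 - r))%nat by lia; rewrite pow_add.
    pose proof (pow_le_1 beta (5 - r) ltac:(lra)).
    assert (0 < beta ^ r) by (apply pow_lt; lra). nra. }
  assert (0 <= beta ^ (q * 6)) by (apply pow_le; lra).
  eapply Rle_trans; [apply survival_geometric|]; eapply Rle_trans; [apply Hq|].
  rewrite pow_add; apply (Rmult_le_reg_l (beta ^ 5)); [lra|].
  rewrite <- Rmult_assoc, Rinv_r by lra; nra.
Qed.

End Survival.

Definition bitR (b : bool) : R := if b then 1 else 0.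

Section Potential.

Variables (c : nat -> R) (p fp : R) (bits : nat -> nat -> bool).
Hypothesis c_nonneg : forall k, (1 <= k)%nat -> 0 <= c k.
Hypothesis c_sum : is_series (fun k => c (S k)) 1.
Hypothesis p_range : 0 < p < 1.
Hypothesis fp_def : is_series (fun k => c (S k) * (1 - p) ^ S k) (1 - fp).
Hypothesis bits_def : forall k, (1 <= k)%nat -> bin_expansion (dcoef c k) (bits k).

(* [dshift i n] is the number 0.b_(n+1) b_(n+2) ... with b = bits i: the probability
   that V_i = 1 when the digit index is n + 1. *)
Fixpoint dshift (i n : nat) : R :=
  match n with
  | O => dcoef c i
  | S k => 2 * dshift i k - bitR (bits i (S k))
  end.

Lemma is_series_dshift (i n : nat) : (1 <= i)%nat ->
  is_series (fun l => bitR (bits i (n + S l)) / 2 ^ S l) (dshift i n).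
Proof.
  intros Hi; induction n as [|n IH]; [apply is_series_Reals, (bits_def i Hi)|].
  set (a := fun l => bitR (bits i (n + S l)) / 2 ^ S l) in IH.
  assert (Htail : is_series (fun l => a (S l)) (dshift i n - a 0%nat)).
  { apply is_series_incr_1.
    match goal with |- is_series _ ?L => replace L with (dshift i n); auto end.
    unfold plus; simpl; ring. }
  replace (dshift i (S n)) with (2 * (dshift i n - a 0%nat))
    by (unfold a; simpl; rewrite Nat.add_1_r; field).
  apply (is_series_ext (fun l => 2 * a (S l))), (is_series_scal_l 2 _ _ Htail).
  intros l; unfold a; replace (n + S (S l))%nat with (S n + S l)%nat by lia.
  simpl; field; apply pow_nonzero; lra.
Qed.

Lemma dshift_bounds (i n : nat) : (1 <= i)%nat -> 0 <= dshift i n <= 1.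
Proof.
  intros Hi.
  assert (Hterm : forall l, 0 <= bitR (bits i (n + S l)) / 2 ^ S l <= / 2 ^ S l).
  { intros l; assert (0 < / 2 ^ S l) by (apply Rinv_0_lt_compat, pow_lt; lra).
    unfold bitR, Rdiv; destruct (bits _ _); lra. }
  split.
  - exact (is_series_nonneg _ _ (fun l => proj1 (Hterm l)) (is_series_dshift i n Hi)).
  - exact (is_series_le_compat _ _ _ _ (fun l => proj2 (Hterm l))
             (is_series_dshift i n Hi) is_series_half).
Qed.

Lemma bits_of_dcoef_1 (i : nat) : (1 <= i)%nat -> dcoef c i = 1 -> forall n, bits i (S n) = true.
Proof.
  intros Hi Hd.
  assert (Hone : forall n, dshift i n = 1).
  { induction n as [|n IH]; [exact Hd|].
    pose proof (proj2 (dshift_bounds i (S n) Hi)) as Hle; cbn [dshift] in *.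
    rewrite IH in *; unfold bitR in *; destruct (bits i (S n)); lra. }
  intros n; pose proof (Hone (S n)) as H1; cbn [dshift] in H1.
  rewrite Hone in H1; unfold bitR in H1; destruct (bits i (S n)); [reflexivity | lra].
Qed.

(* mass_from i = sum_(k >= i) c_k and gf_from i = sum_(k >= i) c_k (1-p)^k. *)
Definition mass_from (i : nat) : R := 1 - psum c (i - 1).

Definition gf_from (i : nat) : R := (1 - fp) - psum (fun k => c k * (1 - p) ^ k) (i - 1).

(* Round i + k is played with probability (1-p)^k mass_from (i + k) / mass_from i once
   round i is, and [rounds_weight i] is the closed form of
   sum_(k >= 0) (1-p)^k mass_from (i + k) (cf. [rounds_weight_succ]). *)
Definition rounds_weight (i : nat) : R := (mass_from i - gf_from i / (1 - p) ^ (i - 1)) / p.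

(* Expected cost of V_i: a pair costs 2 inputs and is accepted with probability
   2p(1-p), and on average two values of T are needed. *)
Definition pair_cost : R := 2 / (p * (1 - p)).

Definition round_cost (i : nat) : R := (1 + pair_cost) * rounds_weight i / mass_from i.

Lemma pair_cost_pos : 0 < pair_cost.
Proof. unfold pair_cost; apply Rdiv_lt_0_compat; nra. Qed.

Lemma dcoef_mass_from (i : nat) : dcoef c i = c i / mass_from i.
Proof. reflexivity. Qed.

Lemma mass_from_succ (k : nat) : mass_from (S (S k)) = mass_from (S k) - c (S k).
Proof. unfold mass_from; simpl; rewrite Nat.sub_0_r; ring. Qed.

Lemma rounds_weight_succ (k : nat) :
  rounds_weight (S k) = mass_from (S k) + (1 - p) * rounds_weight (S (S k)).
Proof.
  assert (0 < (1 - p) ^ k) by (apply pow_lt; lra).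
  unfold rounds_weight, gf_from; rewrite mass_from_succ; simpl; rewrite Nat.sub_0_r.
  field; lra.
Qed.

Lemma tail_bounds (m : nat) :
  0 <= mass_from (S m) /\ 0 <= rounds_weight (S m) <= mass_from (S m) / p.
Proof.
  assert (Hw := is_series_tail_psum c 1 m c_sum).
  assert (Hq := is_series_tail_psum (fun k => c k * (1 - p) ^ k) (1 - fp) m fp_def).
  cbv beta in Hq.
  assert (Hc : forall k, 0 <= c (S (m + k))) by (intros; apply c_nonneg; lia).
  assert (Hpm : 0 < (1 - p) ^ m) by (apply pow_lt; lra).
  assert (Hpow : forall k, 0 <= (1 - p) ^ S (m + k) <= (1 - p) ^ m).
  { intros k; replace (S (m + k)) with (m + S k)%nat by lia; rewrite pow_add.
    pose proof (pow_le_1 (1 - p) (S k) ltac:(lra)); nra. }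
  assert (HW := is_series_nonneg _ _ Hc Hw).
  assert (HQ0 : 0 <= 1 - fp - psum (fun k => c k * (1 - p) ^ k) m).
  { apply (is_series_nonneg _ _ (fun k => Rmult_le_pos _ _ (Hc k) (proj1 (Hpow k))) Hq). }
  assert (HQ1 : 1 - fp - psum (fun k => c k * (1 - p) ^ k) m <= (1 - p) ^ m * (1 - psum c m)).
  { refine (is_series_le_compat _ (fun k => (1 - p) ^ m * c (S (m + k))) _ _ _ Hq
              (is_series_scal_l _ _ _ Hw)).
    intros k; pose proof (Hc k); pose proof (Hpow k); nra. }
  unfold rounds_weight, mass_from, gf_from; replace (S m - 1)%nat with m by lia.
  set (W := 1 - psum c m) in *; set (Q := 1 - fp - psum _ m) in *.
  assert (0 <= Q / (1 - p) ^ m <= W).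
  { split; [apply Rdiv_le_0_compat; lra|].
    apply (Rmult_le_reg_r ((1 - p) ^ m)); [lra|].
    unfold Rdiv; rewrite Rmult_assoc, Rinv_l; lra. }
  assert (0 < / p) by (apply Rinv_0_lt_compat; lra).
  unfold Rdiv at 2 3; split; [lra | split; nra].
Qed.

Lemma round_cost_bounds (m : nat) : 0 <= round_cost (S m) <= (1 + pair_cost) / p.
Proof.
  destruct (tail_bounds m) as (HW & HT0 & HT1).
  pose proof pair_cost_pos.
  assert (Hrounds : 0 <= rounds_weight (S m) / mass_from (S m) <= / p).
  { destruct (Req_dec (mass_from (S m)) 0) as [E | E].
    - rewrite E; unfold Rdiv; rewrite Rinv_0, Rmult_0_r.
      split; [lra | left; apply Rinv_0_lt_compat; lra].
    - split; [apply Rdiv_le_0_compat; lra|].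
      apply (Rmult_le_reg_r (mass_from (S m))); [lra|].
      unfold Rdiv in *; rewrite Rmult_assoc, Rinv_l; lra. }
  unfold round_cost, Rdiv in *; rewrite Rmult_assoc; split; [apply Rmult_le_pos|]; try lra.
  apply Rmult_le_compat_l; lra.
Qed.

Lemma round_cost_succ (k : nat) : 0 < mass_from (S k) ->
  round_cost (S k) = 1 + pair_cost + (1 - p) * (1 - dcoef c (S k)) * round_cost (S (S k)).
Proof.
  intros HW.
  assert (Hd : 1 - dcoef c (S k) = mass_from (S (S k)) / mass_from (S k))
    by (rewrite dcoef_mass_from, mass_from_succ; field; lra).
  destruct (tail_bounds (S k)) as (HW' & HT0 & HT1).
  unfold round_cost; rewrite Hd, (rounds_weight_succ k).
  destruct (Req_dec (mass_from (S (S k))) 0) as [E | E].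
  - (* the round S (S k) is never played: its cost is the junk value x / 0 = 0 *)
    assert (HT : rounds_weight (S (S k)) = 0) by (rewrite E in HT1; unfold Rdiv in HT1; lra).
    rewrite E, HT; replace ((1 + pair_cost) * 0 / 0) with 0 by (unfold Rdiv; ring).
    field; lra.
  - field; lra.
Qed.

Lemma mass_from_succ_pos (i : nat) :
  (1 <= i)%nat -> 0 < mass_from i -> dcoef c i <> 1 -> 0 < mass_from (S i).
Proof.
  intros Hi HW Hd; destruct i as [|k]; [lia|].
  pose proof (proj2 (dshift_bounds (S k) 0 Hi)) as Hle; cbn [dshift] in Hle.
  rewrite dcoef_mass_from in Hle, Hd; rewrite mass_from_succ.
  assert (Hlt : c (S k) / mass_from (S k) < 1) by lra.
  apply (Rmult_lt_compat_r (mass_from (S k))) in Hlt; [|lra].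
  unfold Rdiv in Hlt; rewrite Rmult_assoc, Rinv_l in Hlt; lra.
Qed.

Definition pair_value (i : nat) (x : bool) (j : nat) : R :=
  pair_cost + (if x then 0 else (1 - dshift i (j - 1)) * round_cost (S i)).

(* Expected number of inputs still to be consumed from a state; the [PairSnd] case is
   the one-step expansion over the next input. *)
Definition remaining (st : state) : R :=
  match st with
  | ReadX i => round_cost i
  | PairFst i x j => pair_value i x j
  | PairSnd i x j t =>
      if t
      then 1 + p * pair_value i x j + (1 - p) * (if orb (bits i j) x then 0 else round_cost (S i))
      else 1 + (1 - p) * pair_value i x j + p * pair_value i x (S j)
  | Done _ => 0
  end.

Definition admissible (st : state) : Prop :=
  match st with
  | ReadX i => (1 <= i)%nat /\ 0 < mass_from i
  | PairFst i _ j | PairSnd i _ j _ => (1 <= i)%nat /\ (1 <= j)%nat /\ 0 < mass_from i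
  | Done _ => True
  end.

Lemma admissible_step (st : state) (a : bool) : admissible st -> admissible (step bits st a).
Proof.
  destruct st as [i | i x j | i x j t | y]; simpl; try tauto.
  - intros (Hi & HW); repeat split; auto.
  - intros (Hi & Hj & HW).
    destruct (Bool.eqb t a); [simpl; tauto|].
    destruct (negb t); [simpl; repeat split; auto; lia|].
    destruct (orb (bits i j) x) eqn:E; simpl; auto.
    apply Bool.orb_false_iff in E as [Eb _].
    split; [lia|]; apply mass_from_succ_pos; auto.
    intros Hd; destruct j as [|j]; [lia|].
    rewrite (bits_of_dcoef_1 i Hi Hd j) in Eb; discriminate.
Qed.

Lemma admissible_run_from (st : state) (w : list bool) :
  admissible st -> admissible (run_from bits st w).
Proof.
  revert st; induction w as [|a w IH]; intros st H; [exact H|].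
  apply IH, admissible_step, H.
Qed.

Lemma remaining_done (st : state) : is_done st = true -> remaining st = 0.
Proof. destruct st; try discriminate; reflexivity. Qed.

(* First-step analysis; the [PairFst] case rests on p (1 - p) pair_cost = 2 and on
   2 dshift i j = dshift i (j + 1) + b_(j+1). *)
Lemma remaining_step (st : state) : admissible st ->
  (1 - p) * remaining (step bits st false) + p * remaining (step bits st true) =
  remaining st - (if is_done st then 0 else 1).
Proof.
  destruct st as [i | i x j | i x j [|] | y]; simpl.
  - intros (Hi & HW); destruct i as [|k]; [lia|].
    rewrite (round_cost_succ k HW); unfold pair_value; simpl; ring.
  - intros (Hi & Hj & HW); destruct j as [|j]; [lia|].
    unfold pair_value, pair_cost; simpl; rewrite Nat.sub_0_r.
    destruct x, (bits i (S j)); unfold bitR; simpl; field; lra.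
  - intros _; destruct (orb (bits i j) x); simpl; ring.
  - intros _; ring.
  - intros _; ring.
Qed.

Lemma pair_value_bounds (i : nat) (x : bool) (j : nat) : (1 <= i)%nat ->
  0 <= pair_value i x j <= pair_cost + (1 + pair_cost) / p.
Proof.
  intros Hi; pose proof pair_cost_pos.
  pose proof (round_cost_bounds i); pose proof (dshift_bounds i (j - 1) Hi).
  unfold pair_value; destruct x; [|assert (0 <= (1 - dshift i (j - 1)) * round_cost (S i)
                                             <= (1 + pair_cost) / p) by (split; nra)]; lra.
Qed.

Definition remaining_max : R := 1 + pair_cost + (1 + pair_cost) / p.

Lemma remaining_bounds (st : state) : admissible st ->
  0 <= remaining st <= remaining_max.
Proof.
  pose proof pair_cost_pos; unfold remaining_max.
  destruct st as [i | i x j | i x j t | y]; simpl.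
  - intros (Hi & _); destruct i as [|m]; [lia|]; pose proof (round_cost_bounds m); lra.
  - intros (Hi & _); pose proof (pair_value_bounds i x j Hi); lra.
  - intros (Hi & _).
    pose proof (pair_value_bounds i x j Hi); pose proof (pair_value_bounds i x (S j) Hi).
    pose proof (round_cost_bounds i).
    assert (0 <= (if orb (bits i j) x then 0 else round_cost (S i)) <= (1 + pair_cost) / p)
      by (destruct (orb (bits i j) x); lra).
    destruct t; nra.
  - intros _; split; [lra|].
    assert (0 <= (1 + pair_cost) / p) by (apply Rdiv_le_0_compat; lra); lra.
Qed.

(* The process remaining - (inputs consumed so far) is a martingale. *)
Lemma expect_remaining (st : state) (n : nat) : admissible st ->
  expect p n (fun w => remaining (run_from bits st w)) =
  remaining st - sum_lt (survival bits p st) n.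
Proof.
  intros Hst; induction n as [|n IH]; [rewrite expect_0; simpl; ring|].
  replace (S n) with (n + 1)%nat at 1 by lia; rewrite expect_app.
  transitivity (expect p n (fun u =>
    remaining (run_from bits st u) - (if is_done (run_from bits st u) then 0 else 1))).
  - apply expect_ext; intros u _.
    rewrite expect_S, !expect_0, !run_from_app.
    apply remaining_step, admissible_run_from, Hst.
  - rewrite expect_minus, IH; cbn [sum_lt]; unfold survival; ring.
Qed.

Lemma expect_remaining_bounds (st : state) (n : nat) : admissible st ->
  0 <= expect p n (fun w => remaining (run_from bits st w)) <=
  remaining_max * survival bits p st n.
Proof.
  intros Hst; unfold survival; rewrite <- expect_scal.
  assert (Hp01 : 0 <= p <= 1) by lra.
  split; [apply (expect_ge_const p Hp01) | apply (expect_le p Hp01)]; intros w;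
    pose proof (remaining_bounds _ (admissible_run_from st w Hst)); [lra|].
  destruct (is_done (run_from bits st w)) eqn:E; [rewrite (remaining_done _ E)|]; lra.
Qed.

Lemma remaining_start : remaining (ReadX 1) = fp / p * (1 + 2 / (p * (1 - p))).
Proof.
  simpl; unfold round_cost, rounds_weight, mass_from, gf_from, pair_cost; simpl.
  field; lra.
Qed.

(* The partial sums of sum n Pr[N = n] are remaining (ReadX 1) minus two terms that
   vanish geometrically. *)
Lemma expected_N_series :
  infinite_sum (fun n => INR n * prob_N_eq bits p n) (remaining (ReadX 1)).
Proof.
  destruct (survival_exp_bound bits p p_range) as (A & beta & HA & Hbeta & Hsurv).
  assert (Hstart : admissible (ReadX 1)) by (split; [lia | unfold mass_from; simpl; lra]).
  assert (Hmax : 0 <= remaining_max) by exact (proj2 (remaining_bounds (Done true) I)).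
  assert (Hgeo : is_lim_seq (fun n => beta ^ n) 0)
    by (apply is_lim_seq_geom; rewrite Rabs_pos_eq; lra).
  assert (H0 : is_lim_seq (fun N => expect p N (fun w => remaining (run_from bits (ReadX 1) w))) 0).
  { apply (is_lim_seq_squeeze_0 _ (fun N => remaining_max * (A * beta ^ N))).
    - intros N; destruct (expect_remaining_bounds (ReadX 1) N Hstart); split; auto.
      eapply Rle_trans; [eauto|]; apply Rmult_le_compat_l; auto.
    - apply is_lim_seq_scal_0, is_lim_seq_scal_0, Hgeo. }
  assert (H1 : is_lim_seq (fun N => INR N * survival bits p (ReadX 1) N) 0).
  { apply (is_lim_seq_squeeze_0 _ (fun N => A * (INR N * beta ^ N))).
    - intros N; pose proof (pos_INR N); pose proof (survival_bounds bits p p_range (ReadX 1) N).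
      split; [nra|]; rewrite <- Rmult_assoc, (Rmult_comm A), Rmult_assoc.
      apply Rmult_le_compat_l; auto.
    - apply is_lim_seq_scal_0, is_lim_seq_INR_pow; lra. }
  apply is_lim_seq_Reals.
  apply (is_lim_seq_ext (fun N => remaining (ReadX 1)
            - expect p N (fun w => remaining (run_from bits (ReadX 1) w))
            - INR N * survival bits p (ReadX 1) N)).
  { intros N; rewrite partial_sums_N, expect_remaining by exact Hstart; ring. }
  pose proof (is_lim_seq_minus' _ _ _ _
                (is_lim_seq_minus' _ _ _ _ (is_lim_seq_const (remaining (ReadX 1))) H0) H1) as H.
  rewrite !Rminus_0_r in H; exact H.
Qed.

End Potential.

Theorem theorem5 (c : nat -> R) (p fp : R) (bits : nat -> nat -> bool) :
  (forall k : nat, (1 <= k)%nat -> 0 <= c k) ->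
  infinite_sum (fun k => c (S k)) 1 ->
  0 < p < 1 ->
  (* fp = f(p) = 1 - sum_{k>=1} c_k (1-p)^k *)
  infinite_sum (fun k => c (S k) * (1 - p) ^ (S k)) (1 - fp) ->
  (* bits k is the non-terminating binary expansion of d_k *)
  (forall k : nat, (1 <= k)%nat -> bin_expansion (dcoef c k) (bits k)) ->
  infinite_sum (fun n => INR n * prob_N_eq bits p n)
    (fp / p * (1 + 2 / (p * (1 - p)))) /\
  exists A beta : R, 0 < A /\ beta < 1 /\
    forall n : nat, prob_N_gt bits p n <= A * beta ^ n.
Proof.
  intros Hc Hc1 Hp Hfp Hbin.
  apply is_series_Reals in Hc1, Hfp.
  split.
  - rewrite <- (remaining_start c p fp bits Hp).
    apply expected_N_series; assumption.
  - destruct (survival_exp_bound bits p Hp) as (A & beta & HA & Hbeta & Hsurv).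
    exists A, beta; split; [exact HA | split; [lra |]].
    intros n; rewrite prob_N_gt_survival; apply Hsurv.
Qed.
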